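(* Let $A$ be a countable subset of $\mathbb{R}^d$. Then there exists a lattice $D$ in $\mathbb{R}^d$ such that $D\cap\mathrm{span}_{\mathbb{Q}}(A)=\{0\}$ and $D^\circ\cap\mathrm{span}_{\mathbb{Q}}(A)=\{0\}$, where $D^\circ=\{x\in\mathbb{R}^d:\langle y,x\rangle\in\mathbb{Z}\text{ for all }y\in D\}$ is the dual lattice.
   Context: A lattice in $\mathbb{R}^d$ is a discrete cocompact subgroup. $\mathrm{span}_{\mathbb{Q}}(A)$ is the set of finite rational linear combinations of elements of $A$. *)

(* R^d is 'rV[R]_d for R : realType. *)
From HB Require Import structures.
From mathcomp Require Import all_boot all_order all_algebra.
From mathcomp Require Import all_classical all_reals all_analysis.
Set Implicit Arguments. Unset Strict Implicit. Unset Printing Implicit Defensive.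
Import Order.TTheory GRing.Theory Num.Theory.
Import numFieldNormedType.Exports.
Local Open Scope classical_set_scope.
Local Open Scope ring_scope.

Definition inner (R : realType) (d : nat) (x y : 'rV[R]_d) : R :=
  \sum_(i < d) x ord0 i * y ord0 i.

Definition is_subgroup (R : realType) (d : nat) (D : set 'rV[R]_d) : Prop :=
  D 0 /\ (forall x y, D x -> D y -> D (x - y)).

Definition is_discrete (R : realType) (d : nat) (D : set 'rV[R]_d) : Prop :=
  forall x, D x -> exists2 e : R, 0 < e &
    forall y, D y -> `|y - x| < e -> y = x.

Definition is_cocompact (R : realType) (d : nat) (D : set 'rV[R]_d) : Prop :=
  exists K : set 'rV[R]_d, compact K /\
    forall x, exists k, exists y, K k /\ D y /\ x = k + y.

Definition is_lattice (R : realType) (d : nat) (D : set 'rV[R]_d) : Prop :=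
  [/\ is_subgroup D, is_discrete D & is_cocompact D].

Definition dual_lattice (R : realType) (d : nat) (D : set 'rV[R]_d)
  : set 'rV[R]_d :=
  [set x | forall y, D y -> exists z : int, inner y x = z%:~R].

Definition spanQ (R : realType) (d : nat) (A : set 'rV[R]_d) : set 'rV[R]_d :=
  [set x | exists s : seq (rat * 'rV[R]_d),
     (forall p, p \in s -> A p.2) /\
     x = \sum_(p <- s) (ratr p.1) *: p.2].

(* Take D = t Z^d, whose dual lattice is contained in t^-1 Z^d.  A nonzero
   x in span_Q(A) lies in s Z^d only if s = x_i / z for some coordinate x_i
   and integer z.  Since span_Q(A) is countable, so is the set of all such
   ratios together with their inverses, and any t > 0 outside this countable
   (hence Lebesgue-null) set works for both D and its dual. *)
From HB Require Import structures.
From mathcomp Require Import all_boot all_order all_algebra.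
From mathcomp Require Import all_classical all_reals all_analysis.
From mathcomp Require Import lra.
Import Order.TTheory GRing.Theory Num.Theory.
Import numFieldNormedType.Exports.
Local Open Scope classical_set_scope.
Local Open Scope ring_scope.

Section ScaledGrid.
Set Implicit Arguments. Unset Strict Implicit.
Context {R : realType} {d : nat}.

Lemma countable_exists_pos_notin (S : set R) :
  countable S -> exists2 t : R, 0 < t & ~ S t.
Proof.
move=> cS; apply: contrapT => noT.
have sub01 : `]0, 1[%classic `<=` S.
  move=> x; rewrite /= in_itv /= => /andP[x0 _].
  by apply: contrapT => Sx; apply: noT; exists x.
have := countable_lebesgue_measure0 (sub_countable (subset_card_le sub01) cS).
rewrite lebesgue_measure_itv /= lte_fin ltr01 /= -EFinB subr0.
by move=> /eqP; rewrite eqe oner_eq0.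
Qed.

Implicit Types (t : R) (x y : 'rV[R]_d) (V : set 'rV[R]_d).

Lemma rV_entry_norm_le x i : `|x ord0 i| <= `|x|.
Proof. by rewrite [leRHS]mx_normrE (le_bigmax _ _ (ord0, i)). Qed.

Definition scaled_grid t : set 'rV[R]_d :=
  [set x | forall i, exists z : int, x ord0 i = t * z%:~R].

Lemma scaled_grid_subgroup t : is_subgroup (scaled_grid t).
Proof.
split=> [i|x y Gx Gy i]; first by exists 0; rewrite mxE mulr0.
have [zx ex] := Gx i; have [zy ey] := Gy i.
by exists (zx - zy); rewrite !mxE ex ey intrB mulrBr.
Qed.

Lemma scaled_grid_discrete t : 0 < t -> is_discrete (scaled_grid t).
Proof.
move=> t0 x Gx; exists t => // y Gy lt_yx; apply/rowP => i.
have [z ez] := (scaled_grid_subgroup t).2 _ _ Gy Gx i.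
have z0 : z = 0.
  apply: contraTeq (le_lt_trans (rV_entry_norm_le _ i) lt_yx) => z0.
  rewrite -leNgt ez normrM gtr0_norm // ler_pMr //.
  by rewrite norm_intr_ge1 ?intr_int ?intr_eq0.
by move: ez; rewrite z0 mulr0 !mxE => /subr0_eq.
Qed.

Lemma scaled_grid_cocompact t : 0 < t -> is_cocompact (scaled_grid t).
Proof.
move=> t0; exists [set v | forall i, `[0, t]%classic (v ord0 i)]; split.
  apply: (@rV_compact _ _ (fun=> `[0, t]%classic)) => _.
  exact: segment_compact.
move=> x; pose y := \row_i (t * (Num.floor (x ord0 i / t))%:~R).
exists (x - y), y; split; last split; last by rewrite subrK.
- move=> i; rewrite /= in_itv /= !mxE.
  have /andP[] := floor_itv (x ord0 i / t).
  rewrite ler_pdivlMr // ltr_pdivrMr // intrD mulrDl mul1r.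
  by set f := _%:~R => ? ?; apply/andP; split; lra.
- by move=> i; rewrite mxE; eexists.
Qed.

Lemma scaled_grid_lattice t : 0 < t -> is_lattice (scaled_grid t).
Proof.
move=> t0; split; [exact: scaled_grid_subgroup | exact: scaled_grid_discrete |].
exact: scaled_grid_cocompact.
Qed.

Lemma dual_lattice0 V : dual_lattice V 0.
Proof. by move=> y _; exists 0; rewrite /inner big1 // => i _; rewrite mxE mulr0. Qed.

Lemma dual_scaled_grid_sub t :
  t != 0 -> dual_lattice (scaled_grid t) `<=` scaled_grid t^-1.
Proof.
move=> t0 x Dx i.
pose e := \row_j (t * (j == i)%:R) : 'rV[R]_d.
have Ge : scaled_grid t e.
  by move=> j; exists (j == i)%:R; rewrite mxE; case: (j == i).
have [z ez] := Dx e Ge; exists z; rewrite -ez /inner (bigD1 i) //= big1.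
  by rewrite mxE eqxx mulr1 addr0 mulKf.
by move=> j /negbTE ji; rewrite mxE ji mulr0 mul0r.
Qed.

Definition grid_ratios V : set R :=
  [set r | exists x i (z : int), V x /\
     (r = x ord0 i / z%:~R \/ r = z%:~R / x ord0 i)].

Lemma grid_ratiosV V r : grid_ratios V r -> grid_ratios V r^-1.
Proof.
move=> [x [i [z [Vx r_eq]]]]; exists x, i, z; split => //.
by case: r_eq => ->; rewrite invf_div; [right | left].
Qed.

Lemma grid_ratios_countable V : countable V -> countable (grid_ratios V).
Proof.
move=> cV.
pose ratio (u : 'rV[R]_d * ('I_d * int * bool)) :=
  let: (x, (i, z, b)) := u in
  if b then x ord0 i / z%:~R else z%:~R / x ord0 i.
have cim : countable (ratio @` (V `*` setT)).
  exact: sub_countable (card_image_le _ _) (countableX cV (countableP _)).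
apply: sub_countable (subset_card_le _) cim => r [x [i [z [Vx [->|->]]]]].
- by exists (x, (i, z, true)).
- by exists (x, (i, z, false)).
Qed.

Lemma scaled_grid_meet_sub V t :
  ~ grid_ratios V t -> scaled_grid t `&` V `<=` [set 0].
Proof.
move=> tV x [Gx Vx]; apply/rowP => i; rewrite mxE.
have [z ez] := Gx i; apply: contrapT => /eqP xi0; apply: tV.
have z0 : z%:~R != 0 :> R by apply: contraNneq xi0 => z0; rewrite ez z0 mulr0.
by exists x, i, z; split => //; left; rewrite ez mulfK.
Qed.

Lemma spanQ0 (A : set 'rV[R]_d) : spanQ A 0.
Proof. by exists [::]; rewrite big_nil. Qed.

Lemma spanQ_countable (A : set 'rV[R]_d) : countable A -> countable (spanQ A).
Proof.
move=> /countable_injP[f injf].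
pose g := pinv_ (fun=> 0 : 'rV[R]_d) A f.
have gK a : A a -> g (f a) = a.
  by move=> Aa; rewrite /g (pinvKV _ injf) // inE.
pose comb (s : seq (rat * nat)) := \sum_(p <- s) ratr p.1 *: g p.2.
have cim := sub_countable (card_image_le comb setT) (countableP _).
apply: sub_countable (subset_card_le _) cim => _ [s [sA ->]].
exists [seq (p.1, f p.2) | p <- s] => //.
by rewrite /comb big_map; apply: eq_big_seq => p /sA Ap /=; rewrite gK.
Qed.

End ScaledGrid.

Theorem lemma6p1 (R : realType) (d : nat) (A : set 'rV[R]_d) :
  countable A ->
  exists D : set 'rV[R]_d,
    [/\ is_lattice D,
        D `&` spanQ A = [set 0] &
        dual_lattice D `&` spanQ A = [set 0]].
Proof.
move=> cA.
have [t t0 tB] := countable_exists_pos_notin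
  (grid_ratios_countable (spanQ_countable cA)).
have tVB : ~ grid_ratios (spanQ A) t^-1.
  by move=> /grid_ratiosV; rewrite invrK.
exists (scaled_grid t); split; first exact: scaled_grid_lattice.
- apply/seteqP; split; first exact: scaled_grid_meet_sub.
  by move=> _ ->; split; [exact: (scaled_grid_subgroup t).1 | exact: spanQ0].
- apply/seteqP; split; last first.
    by move=> _ ->; split; [exact: dual_lattice0 | exact: spanQ0].
  move=> x [Dx Sx]; apply: (scaled_grid_meet_sub tVB); split => //.
  exact: dual_scaled_grid_sub (lt0r_neq0 t0) _ Dx.
Qed.
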